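(* Let $M$ be a closed Riemannian manifold with fundamental group $\Gamma$ and universal cover $\widetilde{M}$, let $\Gamma$ act freely and continuously on a Cantor set $X$, and let $\Gamma$ act diagonally on $X\times\widetilde{M}$ (via deck transformations on $\widetilde{M}$). Let $\Gamma(A_1 \times S_1), \ldots, \Gamma(A_r \times S_r)$ be finitely many thick orbits in $X \times \widetilde{M}$. Then for any ball $B(\widetilde{p}, R)$ in $\widetilde{M}$, there exists a partition of $X$ into finitely many clopen sets $X_1, \ldots, X_k$ such that for any $i \in \{1, \ldots, k\}$, any $x, y \in X_i$, any $\widetilde{q} \in B(\widetilde{p}, R)$, and any $j \in \{1, \ldots, r\}$, we have $(x, \widetilde{q}) \in \Gamma(A_j \times S_j)$ if and only if $(y, \widetilde{q}) \in \Gamma(A_j \times S_j)$.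
   Context: A thick set is a subset of $X\times\widetilde{M}$ of the form $A\times S$ with $A\subseteq X$ clopen and $S\subseteq\widetilde{M}$ bounded. A thick set has a non-self-intersecting orbit if it is disjoint from each of its translates $\gamma(A\times S)$, $\gamma\neq 1$; in that case the union $\Gamma(A\times S)$ of it and all its translates is called a thick orbit. *)

From HB Require Import structures.
From mathcomp Require Import all_boot all_order all_algebra.
From mathcomp Require Import all_classical all_reals all_analysis.
Set Implicit Arguments. Unset Strict Implicit. Unset Printing Implicit Defensive.
Import Order.TTheory GRing.Theory Num.Theory.
Local Open Scope classical_set_scope.
Local Open Scope ring_scope.

Record group := Group {
  gcar :> Type;
  gmul : gcar -> gcar -> gcar;
  gone : gcar;
  ginv : gcar -> gcar;
  gmulA : forall a b c, gmul a (gmul b c) = gmul (gmul a b) c;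
  gmul1g : forall a, gmul gone a = a;
  gmulVg : forall a, gmul (ginv a) a = gone }.

Definition is_action (G : group) (T : Type) (act : G -> T -> T) :=
  (forall x, act (gone G) x = x) /\
  (forall g h x, act (gmul g h) x = act g (act h x)).

Definition free_action (G : group) (T : Type) (act : G -> T -> T) :=
  forall g x, act g x = x -> g = gone G.

Definition is_cantor_set (X : topologicalType) :=
  exists (f : X -> cantor_space) (g : cantor_space -> X),
    cancel f g /\ cancel g f /\ continuous f /\ continuous g.

Definition mbounded {R : realType} {M : pseudoMetricType R} (S : set M) :=
  exists (p : M) (r : R), S `<=` ball p r.

Definition isometric_action {R : realType} {M : pseudoMetricType R}
  (G : group) (act : G -> M -> M) :=
  forall g (x y : M) (e : R), ball x e y <-> ball (act g x) e (act g y).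

Definition properly_discontinuous {M : topologicalType}
  (G : group) (act : G -> M -> M) :=
  forall K : set M, compact K ->
    finite_set [set g : G | (act g @` K) `&` K !=set0].

Definition cocompact {M : topologicalType} (G : group) (act : G -> M -> M) :=
  exists K : set M, compact K /\ forall q, exists g : G, K (act g q).

Definition translate {G : group} {X M : Type} (actX : G -> X -> X)
  (actM : G -> M -> M) (g : G) (A : set X) (S : set M) : set (X * M) :=
  [set z | exists a s, A a /\ S s /\ z = (actX g a, actM g s)].

Definition thick_set {R : realType} {X : topologicalType} {M : pseudoMetricType R}
  (A : set X) (S : set M) := clopen A /\ mbounded S.

Definition non_self_intersecting {G : group} {X M : Type} (actX : G -> X -> X)
  (actM : G -> M -> M) (A : set X) (S : set M) :=
  forall g : G, g <> gone G -> translate actX actM g A S `&` (A `*` S) = set0.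

Definition thick_orbit {G : group} {X M : Type} (actX : G -> X -> X)
  (actM : G -> M -> M) (A : set X) (S : set M) : set (X * M) :=
  \bigcup_(g in [set: G]) translate actX actM g A S.

From HB Require Import structures.
From mathcomp Require Import all_boot all_order all_algebra.
From mathcomp Require Import all_classical all_reals all_analysis.
Set Implicit Arguments.
Unset Strict Implicit.
Unset Printing Implicit Defensive.

Local Open Scope classical_set_scope.
Local Open Scope ring_scope.

(* If gS_j meets B(p, R) then gK meets K for the compact set
   K = cl B(p_j, r_j) u cl B(p, R), where S_j <= B(p_j, r_j); by proper
   discontinuity only finitely many g do so.  Hence, for q in B(p, R),
   whether (x, q) lies in Gamma(A_j x S_j) depends on x only through which of
   the finitely many clopen sets gA_j contain x, and the atoms of the Boolean
   algebra they generate form the partition. *)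

Section ClopenPartition.
Variable X : topologicalType.

Lemma clopen_partition_ord (J : finType) (C : J -> set X) :
  (forall j, clopen (C j)) -> trivIset [set: J] C ->
  \bigcup_(j in [set: J]) C j = [set: X] ->
  exists k (P : 'I_k -> set X),
    [/\ forall i, clopen (P i),
        forall i, P i !=set0,
        forall i i', i <> i' -> P i `&` P i' = set0,
        \bigcup_(i in [set: 'I_k]) P i = [set: X]
      & forall i, exists j, P i = C j].
Proof.
move=> Cclopen Cdisj Ccover.
pose nonempty := finset (fun j => `[< C j !=set0 >]).
exists #|nonempty|, (fun i => C (enum_val i)); split.
- by move=> i; exact: Cclopen.
- by move=> i; have := enum_valP i; rewrite inE => /asboolP.
- move=> i i' ne_ii'; apply/seteqP; split => // x CCx.
  by apply: ne_ii'; apply: enum_val_inj; apply: Cdisj => //; exists x.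
- apply/seteqP; split => // x _.
  have [j _ Cjx] : (\bigcup_(j in [set: J]) C j) x by rewrite Ccover.
  have jn : j \in nonempty by rewrite inE; apply/asboolP; exists x.
  by exists (enum_rank_in jn j) => //; rewrite enum_rankK_in.
- by move=> i; exists (enum_val i).
Qed.

Variables (L : finType) (B : L -> set X).

Definition atom (f : {ffun L -> bool}) : set X :=
  \bigcap_(l in [set: L]) (if f l then B l else ~` B l).

Lemma atomP f x : atom f x <-> forall l, B l x <-> f l.
Proof.
split=> [Ax l | Ax l _].
  by case: (f l) (Ax l I) => //= nBx; split=> // /nBx.
by case: (f l) (Ax l) => /= -[Bxf fBx]; [exact: fBx | move=> /Bxf].
Qed.

Lemma atom_clopen f : (forall l, clopen (B l)) -> clopen (atom f).
Proof.
move=> Bclopen; rewrite /atom -bigsetI_fset_set; last exact: finite_finset.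
apply: (big_ind clopen); [exact: clopenT | exact: clopenI |].
move=> l _; case: (f l); first exact: Bclopen.
exact: (clopenC set0 (Bclopen l)).
Qed.

Lemma trivIset_atom : trivIset [set: {ffun L -> bool}] atom.
Proof.
move=> f f' _ _ [x [/atomP Afx /atomP Af'x]]; apply/ffunP => l.
by apply/idP/idP => [/(Afx l).2/(Af'x l).1 | /(Af'x l).2/(Afx l).1].
Qed.

Lemma bigcup_atom : \bigcup_(f in [set: {ffun L -> bool}]) atom f = [set: X].
Proof.
apply/seteqP; split => // x _; exists [ffun l => `[< B l x >] ] => //.
by apply/atomP => l; rewrite ffunE; split => /asboolP.
Qed.

Lemma clopen_refinement : (forall l, clopen (B l)) ->
  exists k (P : 'I_k -> set X),
    [/\ forall i, clopen (P i),
        forall i, P i !=set0,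
        forall i i', i <> i' -> P i `&` P i' = set0,
        \bigcup_(i in [set: 'I_k]) P i = [set: X]
      & forall i x y, P i x -> P i y -> forall l, B l x <-> B l y].
Proof.
move=> Bclopen.
have [k [P [Pclopen Pn0 Pdisj Pcover Patom]]] :=
  clopen_partition_ord (atom_clopen ^~ Bclopen) trivIset_atom bigcup_atom.
exists k, P; split => // i x y; have [f ->] := Patom i => /atomP Ax /atomP Ay l.
by rewrite Ax Ay.
Qed.

End ClopenPartition.

Lemma gmulgV (G : group) (a : G) : gmul a (ginv a) = gone G.
Proof.
have -> : gmul a (ginv a) =
    gmul (gmul (ginv (ginv a)) (ginv a)) (gmul a (ginv a)).
  by rewrite gmulVg gmul1g.
by rewrite -gmulA (gmulA (ginv a) a) gmulVg gmul1g gmulVg.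
Qed.

Lemma image_act (G : group) (T : Type) (act : G -> T -> T) g (D : set T) :
  is_action act -> act g @` D = act (ginv g) @^-1` D.
Proof.
case=> act1 actM; apply/seteqP; split => x /=.
  by move=> [a Da <-]; rewrite -actM gmulVg act1.
by move=> Dx; exists (act (ginv g) x) => //; rewrite -actM gmulgV act1.
Qed.

Lemma clopen_image_act (G : group) (X : topologicalType) (act : G -> X -> X)
    g (D : set X) :
  is_action act -> (forall h, continuous (act h)) ->
  clopen D -> clopen (act g @` D).
Proof.
by move=> hact hcont Dclopen; rewrite image_act //; exact: preimage_clopen.
Qed.

Lemma finite_translates_meeting_ball (R : realType) (M : pseudoMetricType R)
    (G : group) (act : G -> M -> M) (S : set M) (p : M) (rad : R) :
  (forall (q : M) (e : R), compact (closure (ball q e))) ->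
  properly_discontinuous act -> mbounded S ->
  finite_set [set g : G | (act g @` S) `&` ball p rad !=set0].
Proof.
move=> hproper hpd [p0 [r0 Ssub]].
pose K := closure (ball p0 r0) `|` closure (ball p rad).
apply: (sub_finite_set _ (hpd K _)); last exact: compactU.
move=> g [_ [[s Ss <-] pq]]; exists (act g s); split.
  by exists s => //; left; apply/subset_closure/Ssub.
by right; apply: subset_closure.
Qed.

Lemma thick_orbit_transfer (G : group) (X M : Type)
    (actX : G -> X -> X) (actM : G -> M -> M)
    (A : set X) (S U : set M) (x y : X) (q : M) :
  U q ->
  (forall g, (actM g @` S) `&` U !=set0 ->
     (actX g @` A) x -> (actX g @` A) y) ->
  thick_orbit actX actM A S (x, q) -> thick_orbit actX actM A S (y, q).
Proof.
move=> Uq agree [g _ [a [s [Aa [Ss [xE qE]]]]]].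
have xgA : (actX g @` A) x by exists a.
have gSU : (actM g @` S) `&` U !=set0 by exists q; split => //; exists s.
have [a' Aa' ya'] := agree g gSU xgA.
by exists g => //; exists a', s; rewrite ya' qE.
Qed.

Theorem proposition4p1
  (R : realType) (Gamma : group)
  (X : topologicalType) (actX : Gamma -> X -> X)
  (Mt : pseudoMetricType R) (actM : Gamma -> Mt -> Mt)
  (* X is a Cantor set with a free continuous Gamma-action *)
  (hX : is_cantor_set X) (hactX : is_action actX) (hfreeX : free_action actX)
  (hcontX : forall g, continuous (actX g))
  (* Mt models the universal cover of a closed Riemannian manifold with Gamma
     acting by deck transformations *)
  (hMhaus : hausdorff_space Mt) (hMconn : connected [set: Mt])
  (hMproper : forall (p : Mt) (r : R), compact (closure (ball p r)))
  (hactM : is_action actM) (hfreeM : free_action actM)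
  (hisoM : isometric_action actM) (hpdM : properly_discontinuous actM)
  (hcocM : cocompact actM)
  (* finitely many thick orbits *)
  (r : nat) (A : 'I_r -> set X) (S : 'I_r -> set Mt)
  (hthick : forall j, thick_set (A j) (S j))
  (hnsi : forall j, non_self_intersecting actX actM (A j) (S j))
  (p : Mt) (Rad : R) :
  exists (k : nat) (P : 'I_k -> set X),
    (forall i, clopen (P i)) /\
    (forall i, P i !=set0) /\
    (forall i i', i <> i' -> P i `&` P i' = set0) /\
    (\bigcup_(i in [set: 'I_k]) P i = [set: X]) /\
    (forall i x y q j, P i x -> P i y -> ball p Rad q ->
       (thick_orbit actX actM (A j) (S j) (x, q) <->
        thick_orbit actX actM (A j) (S j) (y, q))).
Proof.
pose F j := [set g : Gamma | (actM g @` S j) `&` ball p Rad !=set0].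
have Ffin : finite_set (\bigcup_(j in [set: 'I_r]) F j).
  apply: bigcup_finite => [|j _]; first exact: finite_finset.
  exact: finite_translates_meeting_ball (hthick j).2.
have [s Fs] := (@finite_seqP {classic Gamma} _).1 Ffin.
pose B (l : 'I_r * seq_sub s) := actX (ssval l.2) @` A l.1.
have Bclopen l : clopen (B l).
  exact: clopen_image_act hactX hcontX (hthick l.1).1.
have [k [P [Pclopen Pn0 Pdisj Pcover Pagree]]] := clopen_refinement Bclopen.
exists k, P; do 4 split => //.
suff transfer i x y q j : P i x -> P i y -> ball p Rad q ->
    thick_orbit actX actM (A j) (S j) (x, q) ->
    thick_orbit actX actM (A j) (S j) (y, q).
  move=> i x y q j Px Py pq.
  by split; [exact: (transfer i x y) | exact: (transfer i y x)].
move=> Px Py pq; apply: thick_orbit_transfer pq _ => g gS_meets.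
have gs : (g : {classic Gamma}) \in s.
  have : (\bigcup_(j in [set: 'I_r]) F j) g by exists j.
  by rewrite Fs.
exact: (Pagree i x y Px Py (j, SeqSub gs)).1.
Qed.
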